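(* Let $n\ge 1$ and let $f$ be a real-valued function on the product states of $\mathcal{H}_n=\otimes^n\mathbb{C}^2$ such that there is a constant $c$ with $\sum_{i=1}^{2^n} f(u_i)=c$ for every unentangled orthonormal basis (UOB) $\{u_1,\dots,u_{2^n}\}$ of $\mathcal{H}_n$. Then for each subset $J\subset\Omega_n=\{1,\dots,n\}$ there exists a function $\phi_J$ on $F^{n-|J|}$ (with $F^0=\{\omega\}$ and $\phi_{\Omega_n}(\omega)=c$) such that for every $z\in F_n$, \[ \sum_{L\subset J} f(\sigma_L(z))=\phi_J(\tau_J(z)). \]
   Context: One-qubit states are points of $\mathbb{P}^1(\mathbb{C})$, identified with $\mathbb{C}\cup\{\infty\}$ via $(x,y)\mapsto x/y$. Let $\sigma:\mathbb{C}^2\to\mathbb{C}^2$, $\sigma(x,y)=(-\bar y,\bar x)$; it induces on $\mathbb{C}\cup\{\infty\}$ the map $\sigma z=-1/\bar z$, and $\sigma v$ is (up to phase) the unique state orthogonal to $v$; write $\hat a=\sigma a$. The fundamental domain is $F=\{z\in\mathbb{C}:|z|<1\}\cup\{z\in\mathbb{C}:|z|=1,\ \operatorname{Im}z>0\}\cup\{1\}$. A product (unentangled) state of $\mathcal{H}_n$ is $z_1\otimes\cdots\otimes z_n$ with each $z_i$ a one-qubit state; $F_n=F\otimes\cdots\otimes F$ is the set of product states with all $z_i\in F$, and $F^m$ denotes the direct product of $m$ copies of $F$. A UOB of $\mathcal{H}_n$ is an orthonormal basis consisting of product unit vectors. For $J\subset\Omega_n$, $\sigma_J=T_1\otimes\cdots\otimes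 T_n$ with $T_j=\sigma$ if $j\in J$ and $T_j=\mathbb{I}$ otherwise. For $z=z_1\otimes\cdots\otimes z_n\in F_n$ and $J\ne\Omega_n$ with $\Omega_n\setminus J=\{i_1<\dots<i_k\}$, set $\tau_J(z)=(z_{i_1},\dots,z_{i_k})\in F^{k}$; for $J=\Omega_n$, $\tau_J(z)=\omega$. *)

From mathcomp Require Import all_boot all_algebra.
From mathcomp Require Import reals complex.
Set Implicit Arguments. Unset Strict Implicit. Unset Printing Implicit Defensive.
Import GRing.Theory Num.Theory.
Local Open Scope ring_scope.
Local Open Scope complex_scope.

(* One-qubit states = points of P^1(C) = C ∪ {∞}; we use [option R[i]],
   [Some z] = the finite point z (vector (z,1)), [None] = ∞ (vector (1,0)). *)
Definition P1 (R : realType) := option R[i].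

Definition qvec (R : realType) (p : P1 R) : R[i] * R[i] :=
  match p with Some z => (z, 1) | None => (1, 0) end.

(* sigma(x,y) = (-conj y, conj x), i.e. sigma z = -1/conj z *)
Definition sig (R : realType) (p : P1 R) : P1 R :=
  match p with
  | Some z => if z == 0 then None else Some (- (conjc z)^-1)
  | None => Some 0
  end.

Definition pstate (R : realType) (n : nat) := n.-tuple (P1 R).

(* coordinates of the tensor product vector in C^(2^n) = functions on {0,1}^n *)
Definition tens (R : realType) (n : nat) (u : pstate R n)
    (b : {ffun 'I_n -> bool}) : R[i] :=
  \prod_(k < n) (if b k then (qvec (tnth u k)).2 else (qvec (tnth u k)).1).

Definition hinner (R : realType) (n : nat) (u v : pstate R n) : R[i] :=
  \sum_(b : {ffun 'I_n -> bool}) conjc (tens u b) * tens v b.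

(* A UOB of H_n: 2^n pairwise orthogonal product states (after normalizing each
   vector to unit length, these form an orthonormal family of 2^n vectors
   in the 2^n-dimensional space H_n, i.e. an orthonormal basis). *)
Definition UOB (R : realType) (n : nat) (u : 'I_(2 ^ n) -> pstate R n) : Prop :=
  forall i j : 'I_(2 ^ n), i != j -> hinner (u i) (u j) = 0.

Definition absq (R : realType) (z : R[i]) : R := (@complex.Re R z) ^+ 2 + (@complex.Im R z) ^+ 2.

Definition inF (R : realType) (z : R[i]) : bool :=
  [|| absq z < 1, (absq z == 1) && (0 < @complex.Im R z) | z == 1].

Definition sigmaJ (R : realType) (n : nat) (J : {set 'I_n}) (u : pstate R n)
  : pstate R n :=
  [tuple (if i \in J then sig (tnth u i) else tnth u i) | i < n].

Definition pst (R : realType) (n : nat) (z : n.-tuple R[i]) : pstate R n :=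
  map_tuple (@Some R[i]) z.

(* tau_J(z) = (z_{i_1},...,z_{i_k}) with Ω_n \ J = {i_1 < ... < i_k};
   the empty sequence plays the role of ω when J = Ω_n *)
Definition tauJ (R : realType) (n : nat) (J : {set 'I_n}) (z : n.-tuple R[i])
  : seq R[i] :=
  [seq tnth z i | i <- enum (~: J)].

From mathcomp Require Import all_boot all_algebra.
From mathcomp Require Import reals complex.
Set Implicit Arguments. Unset Strict Implicit. Unset Printing Implicit Defensive.
Import GRing.Theory Num.Theory.
Local Open Scope ring_scope.

(* For a product state u, the states sigma_M u (M a subset of Omega_n) are
   pairwise orthogonal, since at any coordinate k in exactly one of M, M' their
   factors are a qubit and its sigma-image.  So they form a UOB and the f-values
   of all of them sum to c.  If w agrees with u outside J, the mixed family
   sigma_M w (M in J), sigma_M u (M not in J) is still a UOB: when M is in J and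
   M' is not, some k in M' \ J separates them, and there u and w agree.
   Subtracting the two sums, the terms with M not in J cancel, so
   sum_(L in J) f (sigma_L u) depends only on the coordinates of u outside J,
   i.e. on tau_J. *)

Section OneQubit.
Variable R : realType.
Local Arguments conjc : simpl never.

Definition qinner (p q : P1 R) : R[i] :=
  conjc (qvec p).1 * (qvec q).1 + conjc (qvec p).2 * (qvec q).2.

Lemma qinner_sigr (p : P1 R) : qinner p (sig p) = 0.
Proof.
rewrite /qinner; case: p => [z|] /=; last first.
  by rewrite rmorph1 rmorph0 mulr0 mul0r addr0.
have [->|z0] := eqVneq z 0; first by rewrite /= rmorph0 mul0r mulr0 addr0.
by rewrite /= rmorph1 mulr1 mulrN mulfV ?conjc_eq0 // addNr.
Qed.

Lemma qinner_sigl (p : P1 R) : qinner (sig p) p = 0.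
Proof.
rewrite /qinner; case: p => [z|] /=; last first.
  by rewrite rmorph1 rmorph0 mulr0 mul0r addr0.
have [->|z0] := eqVneq z 0.
  by rewrite /= rmorph1 rmorph0 mulr0 mul0r addr0.
by rewrite /= rmorph1 rmorphN fmorphV /= conjcK mulr1 mulNr mulVf // addNr.
Qed.

Lemma qinner_sum_bool (p q : P1 R) :
  qinner p q = \sum_(x : bool) if x then conjc (qvec p).2 * (qvec q).2
                               else conjc (qvec p).1 * (qvec q).1.
Proof. by rewrite /qinner big_bool /= addrC. Qed.

Lemma hinner_prod n (u v : pstate R n) :
  hinner u v = \prod_(k < n) qinner (tnth u k) (tnth v k).
Proof.
under [RHS]eq_bigr do rewrite qinner_sum_bool.
rewrite bigA_distr_bigA /=; apply: eq_bigr => b _.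
rewrite /tens rmorph_prod -big_split /=.
by apply: eq_bigr => k _; case: (b k).
Qed.

Lemma hinner_eq0 n (u v : pstate R n) (k : 'I_n) :
  qinner (tnth u k) (tnth v k) = 0 -> hinner u v = 0.
Proof. by move=> uv0; rewrite hinner_prod (bigD1 k) //= uv0 mul0r. Qed.

Lemma tnth_sigmaJ n (L : {set 'I_n}) (u : pstate R n) (k : 'I_n) :
  tnth (sigmaJ L u) k = if k \in L then sig (tnth u k) else tnth u k.
Proof. by rewrite /sigmaJ tnth_mktuple. Qed.

Lemma hinner_sigmaJ_eq0 n (M M' : {set 'I_n}) (u v : pstate R n) (k : 'I_n) :
  (k \in M) != (k \in M') -> tnth u k = tnth v k ->
  hinner (sigmaJ M u) (sigmaJ M' v) = 0.
Proof.
move=> kMM' uv; apply: (hinner_eq0 (k := k)); rewrite !tnth_sigmaJ uv.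
by case: (k \in M) (k \in M') kMM' => [] [] // _;
  [exact: qinner_sigl | exact: qinner_sigr].
Qed.

End OneQubit.

Lemma exists_separating (T : finType) (M M' : {set T}) :
  M != M' -> exists k, (k \in M) != (k \in M').
Proof.
move=> neqM; apply/existsP; apply: contraR neqM => /existsPn eqM.
by apply/eqP/setP => k; apply/eqP/negPn; exact: eqM.
Qed.

Lemma exists_separating_notin (T : finType) (J M M' : {set T}) :
  M \subset J -> ~~ (M' \subset J) ->
  exists2 k, (k \in M) != (k \in M') & k \notin J.
Proof.
move=> MJ /subsetPn [k kM' kJ]; exists k => //.
by rewrite kM' (contraNF (subsetP MJ k) kJ).
Qed.

Section ConstantSumOnUOB.
Variables (R : realType) (n : nat) (f : pstate R n -> R) (c : R).
Hypothesis hf : forall u : 'I_(2 ^ n) -> pstate R n,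
  UOB u -> \sum_(i < 2 ^ n) f (u i) = c.

Lemma card_subsets : #|{set 'I_n}| = (2 ^ n)%N.
Proof. by rewrite -cardsT -powersetT card_powerset cardsT card_ord. Qed.

Lemma sum_orthogonal_subsets (v : {set 'I_n} -> pstate R n) :
  (forall M M', M != M' -> hinner (v M) (v M') = 0) -> \sum_M f (v M) = c.
Proof.
move=> v_orth.
pose e (i : 'I_(2 ^ n)) : {set 'I_n} :=
  enum_val (cast_ord (esym card_subsets) i).
have e_bij : bijective e.
  exists (fun M => cast_ord card_subsets (enum_rank M)) => [i|M].
    by rewrite /e enum_valK cast_ordKV.
  by rewrite /e cast_ordK enum_rankK.
rewrite -(hf (u := v \o e)); first exact: reindex (onW_bij _ e_bij).
by move=> i j neq_ij; apply: v_orth; rewrite (bij_eq e_bij).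
Qed.

Lemma sum_sigmaJ_family (base : {set 'I_n} -> pstate R n) :
  (forall M M' : {set 'I_n}, M != M' -> exists2 k : 'I_n,
     (k \in M) != (k \in M') & tnth (base M) k = tnth (base M') k) ->
  \sum_M f (sigmaJ M (base M)) = c.
Proof.
move=> base_sep.
apply: sum_orthogonal_subsets => M M' /base_sep [k kMM' bMM'].
exact: hinner_sigmaJ_eq0 kMM' bMM'.
Qed.

Lemma sum_sigmaJ (u : pstate R n) : \sum_M f (sigmaJ M u) = c.
Proof.
apply: (sum_sigmaJ_family (base := fun=> u)) => M M' /exists_separating.
by case=> k kMM'; exists k.
Qed.

Definition sigma_sum (J : {set 'I_n}) (u : pstate R n) : R :=
  \sum_(L : {set 'I_n} | L \subset J) f (sigmaJ L u).

Lemma sigma_sum_setT (u : pstate R n) : sigma_sum [set: 'I_n] u = c.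
Proof. by rewrite -(sum_sigmaJ u); apply: eq_bigl => L; rewrite subsetT. Qed.

Lemma eq_sigma_sum (J : {set 'I_n}) (u w : pstate R n) :
  (forall k, k \notin J -> tnth u k = tnth w k) ->
  sigma_sum J u = sigma_sum J w.
Proof.
move=> uw.
pose base (M : {set 'I_n}) := if M \subset J then w else u.
have mixed : \sum_M f (sigmaJ M (base M)) = c.
  apply: sum_sigmaJ_family => M M' neqM.
  have [eqJ|] := eqVneq (M \subset J) (M' \subset J).
    have [k kMM'] := exists_separating neqM.
    by exists k; rewrite // /base eqJ.
  case MJ: (M \subset J); case M'J: (M' \subset J) => // _.
    have [k kMM' kJ] := exists_separating_notin MJ (negbT M'J).
    by exists k; rewrite // /base MJ M'J uw.
  have [k kMM' kJ] := exists_separating_notin M'J (negbT MJ).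
  by exists k; rewrite 1?eq_sym // /base MJ M'J uw.
have split_sum (F : {set 'I_n} -> R) :
    \sum_M F M = \sum_(M : {set 'I_n} | M \subset J) F M
                 + \sum_(M : {set 'I_n} | ~~ (M \subset J)) F M.
  exact: bigID.
have base_in :
    \sum_(M : {set 'I_n} | M \subset J) f (sigmaJ M (base M)) = sigma_sum J w.
  by apply: eq_bigr => M MJ; rewrite /base MJ.
have base_out : \sum_(M : {set 'I_n} | ~~ (M \subset J)) f (sigmaJ M (base M)) =
                \sum_(M : {set 'I_n} | ~~ (M \subset J)) f (sigmaJ M u).
  by apply: eq_bigr => M /negbTE MJ; rewrite /base MJ.
have := sum_sigmaJ u; rewrite -{}mixed !split_sum base_in base_out.
by move=> /addIr sum_eq; exact: sum_eq.
Qed.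

End ConstantSumOnUOB.

Theorem lemma1 (R : realType) (n : nat) (hn : (0 < n)%N)
    (f : pstate R n -> R) (c : R)
    (hf : forall u : 'I_(2 ^ n) -> pstate R n,
        UOB u -> \sum_(i < 2 ^ n) f (u i) = c) :
  forall J : {set 'I_n},
  exists phi : seq R[i] -> R,
    (J = setT -> phi [::] = c) /\
    forall z : n.-tuple R[i], (forall i, inF (tnth z i)) ->
      \sum_(L : {set 'I_n} | L \subset J) f (sigmaJ L (pst z)) = phi (tauJ J z).
Proof.
move=> J.
pose lift (s : seq R[i]) : n.-tuple R[i] :=
  [tuple if i \in J then 0 else nth 0 s (index i (enum (~: J))) | i < n].
exists (fun s => sigma_sum f J (pst (lift s))); split.
  by move=> ->; rewrite (sigma_sum_setT hf).
move=> z _; rewrite -/(sigma_sum f J (pst z)); apply: (eq_sigma_sum hf) => i iJ.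
rewrite /pst !tnth_map /lift tnth_ord_tuple (negbTE iJ) /tauJ.
have iJc : i \in enum (~: J) by rewrite mem_enum inE.
by rewrite (nth_map i) ?index_mem // nth_index.
Qed.
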